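(* For every positive integer $g$, there exists a $2$-coverable loopless binary matroid $M$ such that in any rank-preserving rainbow circuit-free coloring of $M$, one of the colors is used at least $g$ times.
   Context: A coloring of the ground set $S$ of $M$ is a partition of $S$ into nonempty color classes; it is rainbow circuit-free if no circuit of $M$ has all its elements of pairwise different colors, and rank-preserving if the number of colors equals the rank of $M$. A matroid is $k$-coverable if its ground set can be covered by at most $k$ independent sets. A matroid is binary if it is representable over $GF(2)$. *)

From HB Require Import structures.
From mathcomp Require Import all_boot all_order all_algebra.
Set Implicit Arguments. Unset Strict Implicit. Unset Printing Implicit Defensive.
Import GRing.Theory.
Local Open Scope ring_scope.

(* A matroid with ground set [set: T], given by its independent sets. *)
Record matroid (T : finType) := Matroid {
  indep : {set T} -> bool;
  indep0 : indep set0;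
  indep_sub : forall A B : {set T}, A \subset B -> indep B -> indep A;
  indep_aug : forall A B : {set T}, indep A -> indep B -> (#|A| < #|B|)%N ->
     exists2 x, x \in B :\: A & indep (x |: A)
}.

Section MatroidDefs.
Variables (T : finType) (M : matroid T).

Definition circuit (C : {set T}) : bool :=
  ~~ indep M C && [forall D : {set T}, (D \proper C) ==> indep M D].

Definition mrank : nat := (\max_(A : {set T} | indep M A) #|A|)%N.

Definition loopless : Prop := forall C, circuit C -> #|C| <> 1%N.

Definition coverable (k : nat) : Prop :=
  exists Is : seq {set T}, (size Is <= k)%N /\ all (indep M) Is /\
    \bigcup_(I <- Is) I = [set: T].

Definition binary : Prop :=
  exists (n : nat) (f : T -> 'rV['F_2]_n),
    forall A : {set T}, indep M A = free (map f (enum A)).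

Definition coloring (P : {set {set T}}) : Prop := partition P [set: T].

Definition rainbow (P : {set {set T}}) (C : {set T}) : Prop :=
  {in C &, forall x y, pblock P x = pblock P y -> x = y}.

Definition rainbow_circuit_free (P : {set {set T}}) : Prop :=
  forall C, circuit C -> ~ rainbow P C.

Definition rank_preserving (P : {set {set T}}) : Prop := #|P| = mrank.

End MatroidDefs.

From mathcomp Require Import all_boot all_order all_algebra.
From mathcomp Require Import zify.
Set Implicit Arguments. Unset Strict Implicit. Unset Printing Implicit Defensive.
Import GRing.Theory.
Local Open Scope ring_scope.

(* Let u be a rainbow basis of a binary matroid colored with rank-many colors and without
   rainbow circuits, and let phi be the dual coordinates.  A nonempty rainbow set whose sum
   has zero coordinates on all of its own colors could be completed by basis vectors into a
   rainbow set summing to zero over GF(2), which is impossible.  If no coordinate phi_j were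
   supported in the color class j, every class would be entered (nonzero coordinate) by an
   element of another class; in a minimal nonempty family of classes closed under entering,
   the chosen entering elements form a cycle, so their sum vanishes on the coordinates of the
   family, a contradiction.  Hence some color class contains the support of a nonzero
   functional.  In the column matroid of the Reed-Muller code RM(g, 2g) such supports are
   codewords, of weight at least 2^g, and the points of weight at most g, resp. at least g,
   form two independent sets. *)

Section VectorMatroid.
Variables (F : fieldType) (T : finType) (n : nat) (f : T -> 'rV[F]_n).

Definition vindep (A : {set T}) := free (map f (enum A)).

Lemma vindep0 : vindep set0.
Proof. by rewrite /vindep enum_set0 nil_free. Qed.

Lemma vindepU1 (x : T) (A : {set T}) : x \notin A ->
  vindep (x |: A) = (f x \notin <<map f (enum A)>>)%VS && vindep A.
Proof.
move=> xA; rewrite /vindep (perm_free (perm_map f (enum_setU _ _))) enum_set1.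
by rewrite /= mem_enum (negPf xA) undup_id ?enum_uniq // free_cons.
Qed.

Lemma vindep_sub (A B : {set T}) : A \subset B -> vindep B -> vindep A.
Proof.
move=> sAB; rewrite /vindep.
rewrite -(perm_free (perm_map f (permEl (perm_filterC [in A] (enum B))))) map_cat.
move=> /catl_free.
by rewrite -(perm_free (perm_map f (enum_setI B A))) (setIidPr sAB).
Qed.

Lemma vindep_aug (A B : {set T}) : vindep A -> vindep B -> (#|A| < #|B|)%N ->
  exists2 x, x \in B :\: A & vindep (x |: A).
Proof.
move=> iA iB ltAB; apply/exists_inP; apply: contraTT ltAB => /exists_inPn noaug.
rewrite -leqNgt.
have sBA : (<<map f (enum B)>> <= <<map f (enum A)>>)%VS.
  apply/span_subvP => v /mapP[x]; rewrite mem_enum => xB ->.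
  have [xA|xA] := boolP (x \in A); first by rewrite memv_span ?map_f ?mem_enum.
  by move: (noaug x); rewrite inE xA xB vindepU1 // iA !andbT negbK; apply.
move: iA iB (dimvS sBA); rewrite /vindep /free => /eqP-> /eqP->.
by rewrite !size_map -!cardE.
Qed.

Definition vmatroid := Matroid vindep0 vindep_sub vindep_aug.

Lemma vindep_sum_neq0 (A : {set T}) : vindep A -> A != set0 -> \sum_(x in A) f x != 0.
Proof.
move=> iA /set0Pn[a aA]; apply: contraTneq iA => sum0.
rewrite -(setD1K aA) vindepU1 ?setD11 // negb_and negbK; apply/orP; left.
rewrite (big_setD1 a aA) /= in sum0.
have -> : f a = - \sum_(x in A :\ a) f x by apply/eqP; rewrite -addr_eq0 sum0.
by rewrite rpredN rpred_sum // => x xA; rewrite memv_span ?map_f ?mem_enum.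
Qed.

Lemma vindep_triangular (A : {set T}) (mu : T -> nat) (psi : T -> 'cV[F]_n) :
  (forall p, p \in A -> (f p *m psi p) 0 0 != 0) ->
  (forall p q, p \in A -> q \in A -> p != q -> (mu p <= mu q)%N ->
     (f q *m psi p) 0 0 = 0) ->
  vindep A.
Proof.
elim: {A}_.+1 {-2}A (ltnSn #|A|) => // N IH A ltAN diag tri.
have [->|[p0 p0A]] := set_0Vmem A; first exact: vindep0.
have [p pA pmin] := arg_minnP mu p0A; have {}pA : p \in A := pA.
rewrite -(setD1K pA) vindepU1 ?setD11 //; apply/andP; split; last first.
  apply: IH => [|q /setD1P[_ qA]|q q' /setD1P[_ qA] /setD1P[_ q'A]]; last exact: tri.
    by move: ltAN; rewrite (cardsD1 p A) pA add1n ltnS.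
  exact: diag.
apply: contra (diag p pA) => /coord_span ->.
rewrite mulmx_suml summxE big1 ?eqxx // => i _.
have iA : (i < size (enum (A :\ p)))%N by rewrite -cardE.
have /setD1P[qp qA] : nth p (enum (A :\ p)) i \in A :\ p by rewrite -mem_enum mem_nth.
by rewrite -scalemxAl mxE /= (nth_map p) // tri ?mulr0 // ?pmin // eq_sym.
Qed.

End VectorMatroid.

Lemma F2_neq0 (a : 'F_2) : a != 0 -> a = 1.
Proof. by case: a => -[|[|]] //= ? _; apply: val_inj. Qed.

Lemma F2_add11 : 1 + 1 = 0 :> 'F_2.
Proof. exact: val_inj. Qed.

Lemma F2_addvv (V : lmodType 'F_2) (v : V) : v + v = 0.
Proof. by rewrite -[v]scale1r -scalerDl F2_add11 scale0r. Qed.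

Lemma F2_sum_scale (I : finType) (V : lmodType 'F_2) (a : I -> 'F_2) (v : I -> V) :
  \sum_i a i *: v i = \sum_(i | a i != 0) v i.
Proof.
rewrite [RHS]big_mkcond; apply: eq_bigr => i _.
by have [->|/F2_neq0->] := eqVneq (a i) 0; rewrite ?scale0r ?scale1r.
Qed.

Lemma sum_indicator_imset (R : pzSemiRingType) (I J : finType) (D : {set I}) (g : I -> J) j :
  {in D &, injective g} -> j \in g @: D -> \sum_(i in D) (g i == j)%:R = 1 :> R.
Proof.
move=> injg /imsetP[i0 i0D ->]; rewrite (bigD1 i0) //= eqxx big1 ?addr0 //.
move=> i /andP[iD ii0].
by case: eqP => // /(injg _ _ iD i0D) eq_ii0; rewrite eq_ii0 eqxx in ii0.
Qed.

Section EnteringElements.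
Variables (K T : finType) (n : nat) (f : T -> 'rV['F_2]_n).
Variables (cls : T -> K) (u : K -> T) (phi : K -> {scalar 'rV['F_2]_n}).
Hypothesis cls_u : cancel u cls.
Hypothesis vindep_transversal : forall A : {set T}, {in A &, injective cls} -> vindep f A.
Hypothesis phi_expand : forall x, f x = \sum_k phi k (f x) *: f (u k).

Lemma phi_expand_sum (A : {set T}) (v := \sum_(x in A) f x) :
  v = \sum_(k | phi k v != 0) f (u k).
Proof.
rewrite -F2_sum_scale {1}/v (eq_bigr _ (fun x _ => phi_expand x)) exchange_big /=.
by apply: eq_bigr => k _; rewrite -scaler_suml /v raddf_sum.
Qed.

Lemma transversal_sum_coord (A : {set T}) : A != set0 -> {in A &, injective cls} ->
  exists2 x, x \in A & phi (cls x) (\sum_(y in A) f y) != 0.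
Proof.
move=> A0 injA; set v := \sum_(y in A) f y.
apply/exists_inP; apply: contraTT A0 => /exists_inPn vanish.
set Z := [set k | phi k v != 0].
(* Otherwise completing A by the basis vectors f (u k), k in Z, gives a partial
   transversal whose vectors sum to v + v = 0. *)
have clsAZ x : x \in A -> cls x \notin Z by rewrite inE; apply: vanish.
have disjZA : [disjoint u @: Z & A].
  rewrite disjoints_subset; apply/subsetP => _ /imsetP[k kZ ->]; rewrite inE.
  by apply: contraTN kZ => /clsAZ; rewrite cls_u.
have injAZ : {in A :|: u @: Z &, injective cls}.
  move=> x y /setUP[xA|/imsetP[k kZ ->]] /setUP[yA|/imsetP[l lZ ->]]; rewrite ?cls_u.
  - exact: injA.
  - by move=> e; move: (clsAZ x xA); rewrite e lZ.
  - by move=> e; move: (clsAZ y yA); rewrite -e kZ.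
  - by move->.
have := vindep_sum_neq0 (vindep_transversal injAZ); rewrite setU_eq0 negb_and.
rewrite (big_setID A) setUK setDUl setDv set0U (setDidPl disjZA) big_imset /=; last first.
  by move=> k l _ _; apply: (can_inj cls_u).
have -> : \sum_(x in A) f x = \sum_(k in Z) f (u k).
  by rewrite phi_expand_sum; apply: eq_bigl => k; rewrite inE.
by rewrite F2_addvv eqxx => /implyP; rewrite implybF negb_or => /andP[].
Qed.

Lemma phi_cls x : phi (cls x) (f x) = 1.
Proof.
have inj1 : {in [set x] &, injective cls} by move=> y z /set1P-> /set1P->.
have x0 : [set x] != set0 by apply/set0Pn; exists x; rewrite set11.
have [_ /set1P-> ] := transversal_sum_coord x0 inj1.
by rewrite big_set1 => /F2_neq0.
Qed.

Definition enters x k := (cls x != k) && (phi k (f x) != 0).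

Definition entry_closed (Q : {set K}) :=
  [forall k in Q, exists x, (cls x \in Q) && enters x k].

Definition entry_map (Q : {set K}) (w : K -> T) :=
  forall k, k \in Q -> (cls (w k) \in Q) && enters (w k) k.

Lemma entry_closedP Q : reflect (exists w, entry_map Q w) (entry_closed Q).
Proof.
apply: (iffP forall_inP) => [closedQ|[w wQ] k kQ]; last first.
  by apply/existsP; exists (w k); apply: wQ.
exists (fun k => odflt (u k) [pick x | (cls x \in Q) && enters x k]) => k kQ.
by case: pickP => [x //|none]; have /existsP[x] := closedQ k kQ; rewrite none.
Qed.

Section MinimalEntryClosed.
Variable Q : {set K}.
Hypotheses (Q0 : Q != set0) (closedQ : entry_closed Q).
Hypothesis minQ : forall Q', Q' != set0 -> entry_closed Q' -> (#|Q| <= #|Q'|)%N.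

Lemma entry_map_inj w : entry_map Q w -> {in Q &, injective (cls \o w)}.
Proof.
move=> wQ; apply/imset_injP; rewrite eqn_leq leq_imset_card; apply: minQ.
  by case/set0Pn: Q0 => k kQ; apply/set0Pn; exists (cls (w k)); apply: imset_f.
apply/entry_closedP; exists w => _ /imsetP[k kQ ->].
by case/andP: (wQ k kQ) => wkQ _; rewrite imset_f //=; case/andP: (wQ _ wkQ).
Qed.

Lemma entry_map_coord w k m : entry_map Q w -> k \in Q -> m \in Q -> m != k ->
  cls (w k) != m -> phi m (f (w k)) = 0.
Proof.
(* Otherwise w k could enter m as well, and cls \o w would not be injective on Q. *)
move=> wQ kQ mQ mk wkm; apply/eqP; apply: contraNT mk => nz.
pose w' l := if l == m then w k else w l.
have w'Q : entry_map Q w'.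
  move=> l lQ; rewrite /w'; case: eqP => [->|_]; last exact: wQ.
  by case/andP: (wQ k kQ) => -> _; rewrite /enters wkm.
by apply/eqP/(entry_map_inj w'Q mQ kQ); rewrite /= /w' eqxx; case: eqP.
Qed.

Lemma minimal_entry_closed_absurd : False.
Proof.
have [w wQ] := entry_closedP _ closedQ.
have injw := entry_map_inj wQ.
have prQ : (cls \o w) @: Q = Q.
  apply/eqP; rewrite eqEcard card_in_imset // leqnn andbT.
  by apply/subsetP => _ /imsetP[k kQ ->]; case/andP: (wQ k kQ).
(* The entering elements form a cycle: coordinate m is hit only by w m and by the
   unique w k of class m. *)
have coord_w k m : k \in Q -> m \in Q ->
    phi m (f (w k)) = (k == m)%:R + (cls (w k) == m)%:R.
  move=> kQ mQ; case/andP: (wQ k kQ) => _ /andP[wkk nz].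
  have [<-|km] := eqVneq k m; first by rewrite (negPf wkk) addr0 (F2_neq0 nz).
  have [<-|wkm] := eqVneq (cls (w k)) m; first by rewrite phi_cls add0r.
  by rewrite addr0 (entry_map_coord wQ) // eq_sym.
have injwQ : {in w @: Q &, injective cls}.
  by move=> _ _ /imsetP[k kQ ->] /imsetP[l lQ ->] /(injw k l kQ lQ) ->.
have inj_w : {in Q &, injective w}.
  by move=> k l kQ lQ e; apply: injw; rewrite //= e.
have wQ0 : w @: Q != set0 by rewrite -card_gt0 card_in_imset // card_gt0.
have [_ /imsetP[k kQ ->]] := transversal_sum_coord wQ0 injwQ.
have wkQ : cls (w k) \in Q by case/andP: (wQ k kQ).
rewrite big_imset //= raddf_sum.
rewrite (eq_bigr _ (fun l lQ => coord_w l _ lQ wkQ)) big_split /=.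
rewrite (sum_indicator_imset _ (D := Q) (g := id)) ?imset_id //.
by rewrite (sum_indicator_imset _ (D := Q) (g := cls \o w)) ?prQ // F2_add11.
Qed.

End MinimalEntryClosed.

Lemma exists_class_coord (k0 : K) : exists j, forall x, cls x != j -> phi j (f x) = 0.
Proof.
pose supported j := [forall x, (cls x != j) ==> (phi j (f x) == 0)].
have [j /forallP src|nosrc] := pickP supported.
  by exists j => x xj; apply/eqP; move/implyP: (src x); apply.
have closedT : entry_closed setT.
  apply/forall_inP => j _; move/negbT: (nosrc j); rewrite negb_forall => /existsP[x].
  by rewrite negb_imply => nx; apply/existsP; exists x; rewrite inE.
have T0 : (setT : {set K}) != set0 by apply/set0Pn; exists k0.
have TP : [pred Q : {set K} | (Q != set0) && entry_closed Q] setT by rewrite /= T0.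
have [Q /andP[Q0 closedQ] minQ] := arg_minnP (fun Q : {set K} => #|Q|) TP.
exfalso; apply: (minimal_entry_closed_absurd Q0 closedQ) => Q' Q'0 closedQ'.
by apply: minQ; apply/andP.
Qed.

End EnteringElements.

Lemma mrank_ge (T : finType) (M : matroid T) (A : {set T}) :
  indep M A -> (#|A| <= mrank M)%N.
Proof. by move=> iA; apply: (@leq_bigmax_cond _ (indep M) (fun A => #|A|)). Qed.

Lemma rainbow_indep (T : finType) (M : matroid T) (P : {set {set T}}) (A : {set T}) :
  rainbow_circuit_free M P -> rainbow P A -> indep M A.
Proof.
move=> rcf rA; apply/negPn/negP => nA.
have AP : [pred C : {set T} | (C \subset A) && ~~ indep M C] A by rewrite /= subxx.
have [C /andP[CA nC] Cmin] := arg_minnP (fun C : {set T} => #|C|) AP.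
apply: (rcf C); last by move=> x y xC yC; apply: rA; apply: (subsetP CA).
rewrite /circuit nC; apply/forall_inP => D DC; apply/negPn/negP => nD.
have := Cmin D; rewrite /= (subset_trans (proper_sub DC) CA) nD => /(_ isT).
by rewrite leqNgt proper_card.
Qed.

Section ColoringOfVectorMatroid.
Variables (T : finType) (n : nat) (f : T -> 'rV['F_2]_n) (P : {set {set T}}) (x0 : T).
Hypotheses (colP : coloring P) (rankP : rank_preserving (vmatroid f) P).
Hypothesis rcfP : rainbow_circuit_free (vmatroid f) P.

Let covP : cover P = [set: T]. Proof. by case/and3P: colP => /eqP. Qed.
Let trivP : trivIset P. Proof. by case/and3P: colP. Qed.
Let P0 : set0 \notin P. Proof. by case/and3P: colP. Qed.

Let pblockP x : pblock P x \in P.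
Proof. by rewrite pblock_mem // covP inE. Qed.

Let cls x : 'I_#|P| := enum_rank_in (pblockP x0) (pblock P x).
Let u (i : 'I_#|P|) : T := odflt x0 [pick x in enum_val i].

Let u_in i : u i \in enum_val i.
Proof.
rewrite /u; case: pickP => [x //|none].
have /set0Pn[x] : enum_val i != set0 by apply: contraNneq P0 => <-; apply: enum_valP.
by rewrite none.
Qed.

Let cls_u : cancel u cls.
Proof.
move=> i.
by rewrite /cls (def_pblock trivP (enum_valP i) (u_in i)) enum_valK_in.
Qed.

Let vindep_transversal (A : {set T}) : {in A &, injective cls} -> vindep f A.
Proof.
move=> injA; apply: (rainbow_indep rcfP) => x y xA yA.
by move/(congr1 (enum_rank_in (pblockP x0)))/injA->.
Qed.

Let span_transversal x : f x \in <<[tuple f (u i) | i < #|P|]>>%VS.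
Proof.
set S := [set u i | i : 'I_#|P|].
have iS : vindep f S.
  by apply: vindep_transversal => _ _ /imsetP[i _ ->] /imsetP[j _ ->]; rewrite !cls_u => ->.
have cardS : #|S| = mrank (vmatroid f).
  by rewrite card_imset ?card_ord ?rankP //; apply: can_inj cls_u.
have sSX : (<<map f (enum S)>> <= <<[tuple f (u i) | i < #|P|]>>)%VS.
  apply/span_subvP => v /mapP[y]; rewrite mem_enum => /imsetP[i _ ->] ->.
  by rewrite memv_span // -(tnth_mktuple (fun i => f (u i))) mem_tnth.
apply/negPn/negP => nx.
have xS : x \notin S.
  by apply: contra nx => xS; apply: (subvP sSX); rewrite memv_span ?map_f ?mem_enum.
have : (#|x |: S| <= mrank (vmatroid f))%N.
  apply: (mrank_ge (M := vmatroid f)); rewrite /= vindepU1 // iS andbT.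
  by apply: contra nx; apply: (subvP sSX).
by rewrite cardsU1 xS -cardS ltnn.
Qed.

Lemma color_class_contains_support : exists2 B, B \in P &
  exists phi : {scalar 'rV['F_2]_n},
    (exists x, phi (f x) != 0) /\ (forall x, phi (f x) != 0 -> x \in B).
Proof.
pose X := [tuple f (u i) | i < #|P|].
have expand x : f x = \sum_i coord X i (f x) *: f (u i).
  rewrite {1}(coord_span (span_transversal x)).
  by apply: eq_bigr => i _; rewrite -tnth_nth tnth_mktuple.
have [j classj] := exists_class_coord cls_u vindep_transversal expand (cls x0).
exists (enum_val j); first exact: enum_valP.
exists (coord X j); split.
  by exists (u j); rewrite -{1}(cls_u j) (phi_cls cls_u vindep_transversal expand) oner_eq0.
move=> x; apply: contraNT => xj; apply/eqP/classj; apply: contraNneq xj => <-.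
by rewrite enum_rankK_in ?pblockP // mem_pblock covP inE.
Qed.

End ColoringOfVectorMatroid.

Lemma F2_natr_exp2 k : (2 ^ k)%:R = (k == 0)%N%:R :> 'F_2.
Proof. by rewrite -Fp_nat_mod // modn2 oddX orbF. Qed.

Lemma eq_subset_card (T : finType) (A B : {set T}) :
  A \subset B -> (#|B| <= #|A|)%N -> A = B.
Proof. by move=> AB BA; apply/eqP; rewrite eqEcard AB BA. Qed.

Lemma sum_powerset_disjoint (T : finType) (X p : {set T}) :
  \sum_(S in powerset X) [disjoint S & p]%:R = (X \subset p)%:R :> 'F_2.
Proof.
have natrE (b : bool) : b%:R = (if b then 1 else 0) :> 'F_2 by case: b.
rewrite (eq_bigr _ (fun S _ => natrE _)) -big_mkcondr /= sumr_const.
have -> : #|[pred S in powerset X | [disjoint S & p]]| = #|powerset (X :\: p)|.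
  by apply: eq_card => S; rewrite !inE ?powersetE subsetD.
by rewrite card_powerset F2_natr_exp2 cards_eq0 setD_eq0.
Qed.

Section ReedMuller.
Variable r : nat.
Local Notation point := {set 'I_(r + r)}.

Definition rm_monos : {set point} := [set S : point | (#|S| <= r)%N].

Lemma rm_monos0 : set0 \in rm_monos.
Proof. by rewrite inE cards0. Qed.

(* A point of GF(2)^(r+r) is given by its support; coordinate S of rm_vec p is the value
   at p of the monomial prod_(i in S) (1 - x_i), so the rm_vec p are the columns of a
   generator matrix of the Reed-Muller code RM(r, r + r). *)
Definition rm_vec (p : point) : 'rV['F_2]_#|rm_monos| :=
  \row_i [disjoint (enum_val i : point) & p]%:R.

Definition rm_coord (S : point) : 'cV['F_2]_#|rm_monos| :=
  delta_mx (enum_rank_in rm_monos0 S) 0.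

Lemma rm_vec_coord (p S : point) :
  S \in rm_monos -> (rm_vec p *m rm_coord S) 0 0 = [disjoint S & p]%:R.
Proof. by move=> SM; rewrite -colE !mxE enum_rankK_in. Qed.

Lemma rm_vec_neq0 (p : point) : rm_vec p != 0.
Proof.
apply: contraTneq isT => p0; move: (rm_vec_coord p rm_monos0).
by rewrite p0 mul0mx mxE disjoints_subset sub0set => /eqP; rewrite eq_sym oner_eq0.
Qed.

Lemma rm_vec_coord_down (p q : point) : (#|q| <= r)%N ->
  (rm_vec p *m \sum_(S in powerset q) rm_coord S) 0 0 = (q \subset p)%:R.
Proof.
move=> qr; rewrite mulmx_sumr summxE -sum_powerset_disjoint; apply: eq_bigr => S.
by rewrite powersetE => Sq; rewrite rm_vec_coord // inE (leq_trans (subset_leq_card Sq)).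
Qed.

Lemma rm_indep_high : vindep rm_vec [set p : point | (r <= #|p|)%N].
Proof.
have cardC (p : point) : #|~: p| = (r + r - #|p|)%N.
  by have := cardsC p; rewrite card_ord; lia.
apply: (@vindep_triangular _ _ _ rm_vec _ (fun p => #|p|) (fun p => rm_coord (~: p))).
  move=> p; rewrite inE => rp; rewrite rm_vec_coord ?inE ?cardC; last by lia.
  by rewrite disjoint_sym disjoints_subset setCK subxx.
move=> p q; rewrite inE => rp _ pq pq_card.
rewrite rm_vec_coord ?inE ?cardC; last by lia.
rewrite disjoint_sym disjoints_subset setCK.
by case: (boolP (q \subset p)) => // /eq_subset_card /(_ pq_card) qp; rewrite qp eqxx in pq.
Qed.

Lemma rm_indep_low : vindep rm_vec [set p : point | (#|p| <= r)%N].
Proof.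
apply: (@vindep_triangular _ _ _ rm_vec _ (fun p => #|~: p|)
  (fun p => \sum_(S in powerset p) rm_coord S)).
  by move=> p; rewrite inE => pr; rewrite rm_vec_coord_down // subxx.
move=> p q; rewrite inE => pr _ pq le_compl; rewrite rm_vec_coord_down //.
have qp_card : (#|q| <= #|p|)%N by have := cardsC p; have := cardsC q; lia.
by case: (boolP (p \subset q)) => // /eq_subset_card /(_ qp_card) pq'; rewrite pq' eqxx in pq.
Qed.

Definition rm_eval (w : point -> 'F_2) (p : point) :=
  \sum_(S in rm_monos) w S * [disjoint S & p]%:R.

Lemma rm_vec_scalar (phi : {scalar 'rV['F_2]_#|rm_monos|}) (p : point) :
  phi (rm_vec p) = rm_eval (fun S => phi (delta_mx 0 (enum_rank_in rm_monos0 S))) p.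
Proof.
rewrite [rm_vec p]row_sum_delta linear_sum /rm_eval [in RHS]big_enum_val /=.
by apply: eq_bigr => i _; rewrite linearZ /= mxE enum_valK_in mulrC.
Qed.

Lemma rm_eval_cube_sum (w : point -> 'F_2) (S0 b : point) : S0 \in rm_monos ->
    (forall S, S \in rm_monos -> S0 \proper S -> w S = 0) -> b \subset ~: S0 ->
  \sum_(y in powerset S0) rm_eval w (b :|: y) = w S0.
Proof.
move=> S0M maxS0 bS0.
have termE S : \sum_(y in powerset S0) w S * [disjoint S & b :|: y]%:R =
    w S * [disjoint S & b]%:R * (S0 \subset S)%:R.
  rewrite -sum_powerset_disjoint mulr_sumr; apply: eq_bigr => y _.
  rewrite disjoints_subset setCU subsetI -!disjoints_subset (disjoint_sym y S).
  by rewrite -mulnb natrM mulrA.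
rewrite exchange_big /= (eq_bigr _ (fun S _ => termE S)) (bigD1 S0) //= big1 ?addr0.
  by rewrite subxx disjoint_sym disjoints_subset bS0 !mulr1.
move=> S /andP[SM SS0]; have [S0S|] := boolP (S0 \subset S); last by rewrite mulr0.
by rewrite maxS0 ?mul0r // properEneq eq_sym SS0.
Qed.

Lemma rm_eval_support_card (w : point -> 'F_2) (S0 : point) :
    S0 \in rm_monos -> w S0 != 0 -> (forall S, S \in rm_monos -> S0 \proper S -> w S = 0) ->
  (2 ^ r <= #|[set p | rm_eval w p != 0%R]|)%N.
Proof.
(* For each b disjoint from the maximal monomial S0 of w, w does not vanish at some
   b :|: y with y \subset S0; distinct b give distinct such points. *)
move=> S0M wS0 maxS0.
pose nz_fiber (b y : point) := (y \subset S0) && (rm_eval w (b :|: y) != 0).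
have fiber (b : point) : b \subset ~: S0 -> exists y, nz_fiber b y.
  move=> bS0; apply/existsP; apply: contraLR wS0 => /existsPn fib0.
  rewrite -(rm_eval_cube_sum S0M maxS0 bS0) big1 // => y; rewrite powersetE => yS0.
  by apply/eqP; move: (fib0 y); rewrite /nz_fiber yS0 negbK.
pose h (b : point) := b :|: odflt set0 [pick y | nz_fiber b y].
have hP (b : point) : b \subset ~: S0 ->
    exists2 y : point, y \subset S0 & h b = b :|: y /\ rm_eval w (h b) != 0.
  move=> /fiber[y0 y0P]; rewrite /h; case: pickP => [y /andP[yS0 wy]|/(_ y0)].
    by exists y.
  by rewrite y0P.
have h_inj : {in powerset (~: S0) &, injective h}.
  have hC (b : point) : b \in powerset (~: S0) -> h b :&: ~: S0 = b.
    rewrite powersetE => /[dup] bS0 /hP[y yS0 [-> _]].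
    rewrite setIUl (setIidPl bS0); apply/setUidPl/subsetP => x.
    by rewrite !inE => /andP[/(subsetP yS0)->].
  by move=> b b' bP b'P e; rewrite -(hC b bP) -(hC b' b'P) e.
have : (#|h @: powerset (~: S0)| <= #|[set p | rm_eval w p != 0%R]|)%N.
  apply/subset_leq_card/subsetP => _ /imsetP[b bP ->]; rewrite inE.
  by rewrite powersetE in bP; case: (hP b bP) => y _ [].
rewrite card_in_imset // card_powerset; apply: leq_trans; rewrite leq_exp2l //.
by move: S0M; rewrite inE; have := cardsC S0; rewrite card_ord; lia.
Qed.

Lemma rm_eval_weight (w : point -> 'F_2) : (exists p, rm_eval w p != 0) ->
  (2 ^ r <= #|[set p | rm_eval w p != 0%R]|)%N.
Proof.
case=> p wp.
have /existsP[S1 /andP[S1M wS1]] : [exists S, (S \in rm_monos) && (w S != 0)].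
  apply: contraTT wp => /existsPn w0; rewrite negbK /rm_eval big1 // => S SM.
  by move: (w0 S); rewrite SM negbK => /eqP->; rewrite mul0r.
have S1P : [pred S | (S \in rm_monos) && (w S != 0)] S1 by rewrite /= S1M.
have [S0 /andP[S0M wS0] maxS0] := arg_maxnP (fun S : point => #|S|) S1P.
apply: (rm_eval_support_card S0M wS0) => S SM S0S; apply/eqP; apply: contraTT S0S => wS.
by rewrite properEcard negb_and orbC -leqNgt; apply/orP; left; apply: maxS0; rewrite /= SM.
Qed.

Lemma rm_support_card (phi : {scalar 'rV['F_2]_#|rm_monos|}) :
  (exists p, phi (rm_vec p) != 0) -> (2 ^ r <= #|[set p | phi (rm_vec p) != 0%R]|)%N.
Proof.
under eq_finset => p do rewrite rm_vec_scalar.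
by case=> p; rewrite rm_vec_scalar => nz; apply: rm_eval_weight; exists p.
Qed.

Lemma rm_coverable : coverable (vmatroid rm_vec) 2.
Proof.
exists [:: [set p : point | (#|p| <= r)%N]; [set p : point | (r <= #|p|)%N]]; split=> //.
split; first by rewrite /= rm_indep_low rm_indep_high.
by rewrite !big_cons big_nil setU0; apply/setP => p; rewrite !inE leq_total.
Qed.

Lemma rm_loopless : loopless (vmatroid rm_vec).
Proof.
move=> C /andP[nC _] /eqP/cards1P[p Cp]; move: nC.
by rewrite Cp /= /vindep enum_set1 seq1_free rm_vec_neq0.
Qed.

End ReedMuller.

Theorem theorem6 (g : nat) (hg : (0 < g)%N) :
  exists (T : finType) (M : matroid T),
    coverable M 2 /\ loopless M /\ binary M /\
    forall P : {set {set T}}, coloring P -> rank_preserving M P ->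
      rainbow_circuit_free M P -> exists2 B, B \in P & (g <= #|B|)%N.
Proof.
exists _, (vmatroid (@rm_vec g)).
split; [exact: rm_coverable | split; [exact: rm_loopless | split]].
  by exists #|rm_monos g|, (@rm_vec g).
move=> P colP rankP rcfP.
have [B BP [phi [phi_nz suppB]]] := color_class_contains_support set0 colP rankP rcfP.
exists B => //; apply: leq_trans (ltnW (ltn_expl g (ltnSn 1))) _.
apply: leq_trans (rm_support_card phi_nz) (subset_leq_card _).
by apply/subsetP => p; rewrite inE; apply: suppB.
Qed.
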